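(* Let $\pi^{(d)}$ be $\tau^{(d)}$ with $d\ge6$ or $\sigma^{(d)}$ with $d\ge8$, and write $Q=Q_{\pi^{(d)}}$, $\Omega=\Omega_{\pi^{(d)}}$. Then $\{\overline{e}_\alpha\}_{\alpha\in\mathcal{A}}^{Q}=\mathrm{NS}(Q)\setminus\ker\overline{\Omega}$.
   Context: Alphabet $\mathcal{A}=\{1,\dots,d\}$; $\tau^{(d)}$ has top row $1,2,\dots,d$ and bottom row $d,d-1,\dots,6,3,2,5,4,1$; $\sigma^{(d)}$ has top row $1,\dots,d$ and bottom row $d,d-1,\dots,8,3,2,7,6,5,4,1$ (rows list letters in order of $\pi_{\mathrm t}$, $\pi_{\mathrm b}$). $(\Omega_\pi)_{\alpha\beta}=+1$ if $\pi_{\mathrm t}(\alpha)<\pi_{\mathrm t}(\beta)$ and $\pi_{\mathrm b}(\alpha)>\pi_{\mathrm b}(\beta)$, $-1$ if the reverse inequalities hold, $0$ otherwise. Bar denotes reduction mod 2; $\langle u,v\rangle=u\overline{\Omega}v^{\intercal}$ on $(\mathbb{Z}/2\mathbb{Z})^{\mathcal{A}}$ and $\ker\overline{\Omega}=\{u:\langle u,v\rangle=0\ \forall v\}$. $Q_\pi(u)=\sum_{\pi_{\mathrm t}(\alpha)<\pi_{\mathrm t}(\beta)}u_\alpha(\Omega_\pi)_{\alpha\beta}u_\beta+\sum_\alpha u_\alpha\bmod2$. $\mathrm{NS}(Q)=\{u:Q(u)=1\}$ (non-singular vectors). A set $X\subseteq\mathrm{NS}(Q)$ is $Q$-closed if $v,w\in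 X$ and $Q(v+w)=1$ imply $v+w\in X$; $Y^{Q}$ is the smallest $Q$-closed set containing $Y\subseteq\mathrm{NS}(Q)$. *)

From HB Require Import structures.
From mathcomp Require Import all_boot all_order all_algebra.
Set Implicit Arguments. Unset Strict Implicit. Unset Printing Implicit Defensive.
Import Order.TTheory GRing.Theory Num.Theory.
Local Open Scope ring_scope.

(* Alphabet {1,...,d} is represented by 'I_d : letter alpha = (val alpha).+1.
   A (generalized) permutation pi = (pi_t, pi_b) is given by the position
   functions of letters in the top and bottom rows (0-based positions;
   only comparisons matter). *)
Record gperm (d : nat) := GPerm { pit : 'I_d -> nat ; pib : 'I_d -> nat }.

Definition perm_of_bottom (d : nat) (bot : seq nat) : gperm d :=
  @GPerm d (fun a => val a) (fun a => index (val a).+1 bot).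

Definition tau_bottom (d : nat) : seq nat :=
  rev (iota 6 (d - 5)) ++ [:: 3; 2; 5; 4; 1]%N.
Definition sigma_bottom (d : nat) : seq nat :=
  rev (iota 8 (d - 7)) ++ [:: 3; 2; 7; 6; 5; 4; 1]%N.

Definition tau (d : nat) : gperm d := perm_of_bottom d (tau_bottom d).
Definition sigma (d : nat) : gperm d := perm_of_bottom d (sigma_bottom d).

Definition Omega (d : nat) (pi : gperm d) : 'M[int]_d :=
  \matrix_(a < d, b < d)
    (if (pit pi a < pit pi b)%N && (pib pi a > pib pi b)%N then 1
     else if (pit pi a > pit pi b)%N && (pib pi a < pib pi b)%N then -1
     else 0).

Definition Omegabar (d : nat) (pi : gperm d) : 'M['F_2]_d :=
  map_mx (fun z : int => z%:~R) (Omega pi).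

Definition vec (d : nat) := 'rV['F_2]_d.

Definition ebar (d : nat) (a : 'I_d) : vec d := delta_mx 0 a.

Definition form (d : nat) (pi : gperm d) (u v : vec d) : 'F_2 :=
  (u *m Omegabar pi *m v^T) 0 0.

Definition kerOmega (d : nat) (pi : gperm d) : {set vec d} :=
  [set u | [forall v, form pi u v == 0]].

Definition Qform (d : nat) (pi : gperm d) (u : vec d) : 'F_2 :=
  \sum_(a < d) \sum_(b < d | (pit pi a < pit pi b)%N)
      u 0 a * Omegabar pi a b * u 0 b
  + \sum_(a < d) u 0 a.

Definition NS (d : nat) (pi : gperm d) : {set vec d} :=
  [set u | Qform pi u == 1].

Definition Qclosed (d : nat) (pi : gperm d) (X : {set vec d}) : bool :=
  (X \subset NS pi) &&
  [forall v in X, forall w in X, (Qform pi (v + w) == 1) ==> (v + w \in X)].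

Definition Qclosure (d : nat) (pi : gperm d) (Y : {set vec d}) : {set vec d} :=
  \bigcap_(X | Qclosed pi X && (Y \subset X)) X.

(* For tau and sigma every pair of letters is inverted except the pairs formed by a
   letter of P = {2, 3} and a letter of R = {4, ..., r + 3} (r = 2 for tau, r = 4 for
   sigma).  Hence Q(u) and the vector u Omegabar only depend on the profile (x, y, z) of
   u: the numbers of letters of P, R and of the remaining letters U in the support of u.

   NS \ ker is Q-closed: Q(v + w) = Q(v) + Q(w) + <v, w> forces <v, w> = 1, and then
   <v + w, v> = 1.  Conversely, a Q-closed X containing every e_a contains u as soon as
   it contains u + e_a and Q(u) = 1, and Q(u + e_a) = Q(u) + 1 + (u Omegabar)_a.  So it
   suffices to walk, through profiles with Q = 1, from the profile of u to that of a
   single letter.  Explicit short walks lower z; the only profile where this fails is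
   that of the all-ones vector when |U| is odd, and that vector lies in ker.  The finitely
   many profiles with z = 0 are settled by a bounded search run by computation. *)

From HB Require Import structures.
From mathcomp Require Import all_boot all_order all_algebra.
From mathcomp Require Import zify ring.
Set Implicit Arguments. Unset Strict Implicit. Unset Printing Implicit Defensive.
Import Order.TTheory GRing.Theory Num.Theory.
Local Open Scope ring_scope.

Lemma F2_addxx (x : 'F_2) : x + x = 0.
Proof. exact/addrr_pchar2/pchar_Fp. Qed.

Lemma F2_nat (n : nat) : n%:R = (odd n)%:R :> 'F_2.
Proof. by rewrite -modn2 Fp_nat_mod. Qed.

Lemma F2_cases (x : 'F_2) : x = 0 \/ x = 1.
Proof. by case: x => [[|[|]]] //= ?; [left|right]; apply: val_inj. Qed.

Lemma F2_eq_neq0 (x : 'F_2) : x = (x != 0)%:R.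
Proof. by case: x => [[|[|]]] //= ?; apply: val_inj. Qed.

Lemma ebarE d (c a : 'I_d) : ebar c 0 a = (a == c)%:R.
Proof. by rewrite mxE eqxx. Qed.

Lemma addebarK d (u : vec d) c : u + ebar c + ebar c = u.
Proof. by apply/rowP => a; rewrite !mxE -addrA F2_addxx addr0. Qed.

Lemma Omegabar_inversion d (pi : gperm d) a b :
  Omegabar pi a b = ((pit pi a < pit pi b) && (pib pi b < pib pi a)
                     || (pit pi b < pit pi a) && (pib pi a < pib pi b))%N%:R.
Proof. by rewrite !mxE; case: ifP => _ /=; [|case: ifP => _]; apply/eqP. Qed.

Lemma Omegabar_sym d (pi : gperm d) a b : Omegabar pi a b = Omegabar pi b a.
Proof. by rewrite !Omegabar_inversion orbC. Qed.

Lemma Omegabar_diag d (pi : gperm d) a : Omegabar pi a a = 0.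
Proof. by rewrite Omegabar_inversion ltnn. Qed.

Section QuadraticForm.

Variables (d : nat) (pi : gperm d).
Local Notation M := (Omegabar pi).

Lemma formE (u v : vec d) : form pi u v = \sum_a \sum_b u 0 a * M a b * v 0 b.
Proof.
rewrite /form mxE exchange_big; apply: eq_bigr => b _.
by rewrite !mxE big_distrl; apply: eq_bigr => a _; rewrite mxE.
Qed.

Lemma form_sym (u v : vec d) : form pi u v = form pi v u.
Proof.
rewrite !formE exchange_big; apply: eq_bigr => a _; apply: eq_bigr => b _.
by rewrite Omegabar_sym; ring.
Qed.

Lemma formDl (u v w : vec d) : form pi (u + v) w = form pi u w + form pi v w.
Proof. by rewrite /form !mulmxDl mxE. Qed.

Lemma form_ebar (u : vec d) c : form pi u (ebar c) = (u *m M) 0 c.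
Proof.
rewrite /form mxE (bigD1 c) //= big1 => [|b /negbTE nbc]; last by rewrite !mxE nbc andbF mulr0.
by rewrite !mxE !eqxx mulr1 addr0.
Qed.

Lemma Qform_ebar c : Qform pi (ebar c) = 1.
Proof.
rewrite /Qform big1 ?add0r => [|a _]; last first.
  apply: big1 => b ltab; rewrite !ebarE; case: eqP => [ac|]; last by rewrite !mul0r.
  by case: eqP => [bc|]; [move: ltab; rewrite ac bc ltnn | rewrite mulr0].
rewrite (bigD1 c) //= big1 ?addr0 => [|a /negbTE nac]; by rewrite ebarE ?eqxx ?nac.
Qed.

Lemma Qform0 : Qform pi 0 = 0.
Proof.
rewrite /Qform !big1 ?addr0 // => a _; rewrite mxE //.
by rewrite big1 // => b _; rewrite mxE !mul0r.
Qed.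

Lemma kerOmegaP (u : vec d) : reflect (forall c, (u *m M) 0 c = 0) (u \in kerOmega pi).
Proof.
rewrite inE; apply: (iffP forallP) => [uker c | uM0 v].
  by rewrite -form_ebar; apply/eqP/uker.
by rewrite /form mxE big1 // => c _; rewrite uM0 mul0r.
Qed.

Lemma QclosedP (X : {set vec d}) (v w : vec d) : Qclosed pi X ->
  v \in X -> w \in X -> Qform pi (v + w) = 1 -> v + w \in X.
Proof.
move=> /andP [_ /forall_inP clX] vX wX Qvw.
by have /forall_inP /(_ w wX) /implyP := clX v vX; apply; rewrite Qvw.
Qed.

Lemma Qclosed_toggle (X : {set vec d}) (u : vec d) c : Qclosed pi X ->
  ebar c \in X -> u + ebar c \in X -> Qform pi u = 1 -> u \in X.
Proof.
by move=> clX eX ueX Qu; have := QclosedP clX ueX eX; rewrite addebarK; apply.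
Qed.

Hypothesis pit_inj : injective (pit pi).

Lemma sum_pairs (F : 'I_d -> 'I_d -> 'F_2) : (forall a, F a a = 0) ->
  \sum_a \sum_b F a b = \sum_a \sum_(b | (pit pi a < pit pi b)%N) (F a b + F b a).
Proof.
move=> F0; under [RHS]eq_bigr do rewrite big_split.
rewrite big_split /=.
have -> : \sum_a \sum_(b | (pit pi a < pit pi b)%N) F b a =
          \sum_a \sum_(b | (pit pi b < pit pi a)%N) F a b.
  by rewrite (exchange_big_dep xpredT) //=.
rewrite -big_split; apply: eq_bigr => a _ /=.
rewrite !(big_mkcond (fun b => _ < _)%N) -big_split; apply: eq_bigr => b _ /=.
by case: ltngtP => [||/pit_inj ->]; rewrite ?addr0 ?add0r.
Qed.

Lemma QformD (u v : vec d) : Qform pi (u + v) = Qform pi u + Qform pi v + form pi u v.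
Proof.
rewrite /Qform formE (@sum_pairs (fun a b => u 0 a * M a b * v 0 b)) => [|a]; last first.
  by rewrite Omegabar_diag mulr0 mul0r.
have expand a b : (u 0 a + v 0 a) * M a b * (u 0 b + v 0 b) = u 0 a * M a b * u 0 b
    + v 0 a * M a b * v 0 b + (u 0 a * M a b * v 0 b + u 0 b * M b a * v 0 a).
  by rewrite (Omegabar_sym pi b a); ring.
under eq_bigr do under eq_bigr do rewrite [(u + v) _ _]mxE [(u + v) _ _]mxE expand.
under eq_bigr do rewrite !big_split /=.
under [\sum_a (u + v) 0 a]eq_bigr do rewrite mxE.
rewrite !big_split /=.
under [X in _ = _ + X]eq_bigr do rewrite big_split /=.
rewrite [X in _ = _ + X]big_split /=; ring.
Qed.

Lemma form_alt (u : vec d) : form pi u u = 0.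
Proof.
have := QformD u u; rewrite (_ : u + u = 0) ?Qform0 ?F2_addxx ?add0r //.
by apply/rowP => a; rewrite !mxE F2_addxx.
Qed.

Lemma Qform_addebar (u : vec d) c : Qform pi (u + ebar c) = Qform pi u + 1 + (u *m M) 0 c.
Proof. by rewrite QformD Qform_ebar form_ebar. Qed.

Lemma Qclosed_NS_ker : Qclosed pi (NS pi :\: kerOmega pi).
Proof.
apply/andP; split; first by apply/subsetP => u /setDP [].
apply/forall_inP => v /setDP [vNS vker]; apply/forall_inP => w /setDP [wNS wker].
apply/implyP => /eqP Qvw; rewrite !inE Qvw eqxx andbT.
move: vNS wNS; rewrite !inE => /eqP Qv /eqP Qw.
have vw1 : form pi v w = 1 by move: Qvw; rewrite QformD Qv Qw F2_addxx add0r.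
apply/negP => /forallP /(_ v) /eqP.
by rewrite formDl form_alt add0r form_sym vw1; apply/eqP; rewrite oner_eq0.
Qed.

End QuadraticForm.

Local Open Scope nat_scope.

(* A profile (x, y, z) counts letters of P, R and U; a move (i, add) adds or removes
   one letter of class i (0 for P, 1 for R, 2 for U). *)
Definition profile := (nat * nat * nat)%type.

Definition weight (p : profile) := p.1.1 + p.1.2 + p.2.

Definition coord (p : profile) (i : nat) : nat :=
  if i == 0 then p.1.1 else if i == 1 then p.1.2 else if i == 2 then p.2 else 0.

Definition csize (r Un i : nat) : nat :=
  if i == 0 then 2 else if i == 1 then r else if i == 2 then Un else 0.

Definition step (p : profile) (m : nat * bool) : profile :=
  let: (x, y, z) := p in let: (i, add) := m in
  let f n := if add then n.+1 else n.-1 in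
  if i == 0 then (f x, y, z) else if i == 1 then (x, f y, z)
  else if i == 2 then (x, y, f z) else p.

(* The parity of (u Omegabar)_c when u has profile p, c has class m.1 and u_c = 0 iff
   m.2 (see mulmx_pattern): toggling c keeps Q = 1 exactly when it is odd. *)
Definition keepsQ (p : profile) (m : nat * bool) : bool :=
  odd (weight p + ~~ m.2 + (m.1 == 1) * p.1.1 + (m.1 == 0) * p.1.2).

Definition move_ok (r Un : nat) (p : profile) (m : nat * bool) : bool :=
  (if m.2 then coord p m.1 < csize r Un m.1 else 0 < coord p m.1) && keepsQ p m.

Definition qprof (p : profile) : bool := odd ('C((weight p).+1, 2) + p.1.1 * p.1.2).

Lemma weight_add p i : i < 3 -> weight (step p (i, true)) = (weight p).+1.
Proof. by case: p => [[x y] z]; case: i => [|[|[|]]] // _; rewrite /weight /=; lia. Qed.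

Lemma qprof_add p i : i < 3 -> qprof (step p (i, true)) = qprof p (+) ~~ keepsQ p (i, true).
Proof.
move=> i_lt3; rewrite /qprof weight_add // binS bin1 /keepsQ.
by case: p => [[x y] z]; case: i i_lt3 => [|[|[|]]] // _; rewrite /weight /=; lia.
Qed.

Inductive reach (r Un : nat) (T : pred profile) : profile -> Prop :=
  | reach_done p of T p : reach r Un T p
  | reach_step p m of move_ok r Un p m & reach r Un T (step p m) : reach r Un T p.

Fixpoint follows (r Un : nat) (p : profile) (ms : seq (nat * bool)) : bool :=
  if ms is m :: ms' then move_ok r Un p m && follows r Un (step p m) ms' else true.

Lemma follows_reach r Un (T : pred profile) p ms :
  follows r Un p ms -> T (foldl step p ms) -> reach r Un T p.
Proof.
elim: ms p => [|m ms IHms] p /=; first by move=> _ Tp; apply: reach_done.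
by case/andP=> ok fol Tend; apply: reach_step ok (IHms _ fol Tend).
Qed.

Definition moves : seq (nat * bool) := [seq (i, b) | i <- iota 0 3, b <- [:: true; false]].

Fixpoint reachb (r Un : nat) (T : pred profile) (ms : seq (nat * bool)) (n : nat)
    (p : profile) : bool :=
  if T p then true else if n is n'.+1 then
    has (fun m => if move_ok r Un p m then reachb r Un T ms n' (step p m) else false) ms
  else false.

Lemma reachbP r Un T ms n p : reachb r Un T ms n p -> reach r Un T p.
Proof.
elim: n p => [|n IHn] p /=; case: ifP => [Tp _ | _]; try exact: reach_done; first by [].
by case/hasP => m _; case: ifP => // ok /IHn; apply: reach_step.
Qed.

Lemma reach_widen r Un T p : 2 <= Un -> reach r 2 T p -> reach r Un T p.
Proof.
move=> Un2; elim=> {p} [p Tp | p [i add] ok _ IH]; first exact: reach_done.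
apply: reach_step IH; move: ok; rewrite /move_ok /csize /=.
by case: add => //; case: (i == 0) => //; case: (i == 1) => //; case: (i == 2) => //; lia.
Qed.

Lemma reach_single_noU r x y : r \in [:: 2; 4] -> x <= 2 -> y <= r -> qprof (x, y, 0) ->
  reach r 2 [pred p | weight p == 1] (x, y, 0).
Proof.
move=> r24 hx hy qxy; apply: (@reachbP _ _ _ moves 10).
have : all (fun x => all (fun y => qprof (x, y, 0) ==>
          reachb r 2 [pred p | weight p == 1] moves 10 (x, y, 0)) (iota 0 r.+1)) (iota 0 3).
  by move: r24; rewrite !inE => /orP [] /eqP ->; vm_compute.
move=> /allP /(_ x); rewrite mem_iota => /(_ hx) /allP /(_ y).
by rewrite mem_iota ltnS => /(_ hy); rewrite qxy.
Qed.

Local Ltac profile_lia := rewrite /= /move_ok /coord /csize /keepsQ /weight /=; lia.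

Lemma reach_fewer_U r Un x y z : 0 < r -> ~~ odd r -> x <= 2 -> y <= r -> 0 < z <= Un ->
  ~~ [&& x == 2, y == r, z == Un & odd Un] -> reach r Un [pred p | p.2 < z] (x, y, z).
Proof.
move=> r_gt0 r_even hx hy hz not_full.
have [k_odd|k_even] := boolP (odd (x + y + z)); last first.
  by apply: (@follows_reach _ _ _ _ [:: (2, false)]); profile_lia.
have [/hasP [m flip ok] | no_flip] :=
  boolP (has (move_ok r Un (x, y, z)) [:: (0, true); (0, false); (1, true); (1, false)]).
  by apply: (@follows_reach _ _ _ _ [:: m; (2, false)]); move: flip ok; rewrite !inE;
    case/or4P => /eqP ->; profile_lia.
have /and3P [/eqP x2 /eqP yr z_odd] : [&& x == 2, y == r & odd z].
  by move: no_flip; profile_lia.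
(* At (2, r, z) with z odd no move in P or R is possible: detour through z + 1 < Un. *)
subst x y; apply: (@follows_reach _ _ _ _
  [:: (2, true); (0, false); (1, false); (2, false); (0, false); (2, false)]); profile_lia.
Qed.

Local Open Scope ring_scope.

(* The class of the letter i + 1: 0 for P, 1 for R, 2 for U. *)
Definition blk (r i : nat) : nat :=
  if (0 < i < 3)%N then 0 else if (2 < i < r + 3)%N then 1 else 2.

Definition PRpair (r i j : nat) : bool :=
  [&& blk r i < 2, blk r j < 2 & blk r i != blk r j]%N.

Definition PR_pattern d r (M : 'M['F_2]_d) : Prop :=
  forall a b : 'I_d, M a b = ((a != b) && ~~ PRpair r a b)%:R.

Lemma blk_lt3 r i : (blk r i < 3)%N.
Proof. by rewrite /blk; case: ifP => // _; case: ifP. Qed.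

Lemma sum_entries_in d (u : vec d) (P : pred 'I_d) :
  \sum_a u 0 a * (P a)%:R = #|[pred a | P a && (u 0 a != 0)]|%:R.
Proof.
rewrite -sum1_card natr_sum [RHS]big_mkcond /=; apply: eq_bigr => a _.
rewrite inE; case: (P a); case: (F2_cases (u 0 a)) => ->;
  by rewrite ?mulr1 ?mulr0 ?eqxx ?oner_neq0.
Qed.

Section BlockPattern.

Variables (d r : nat) (pi : gperm d).
Local Notation M := (Omegabar pi).
Local Notation Un := (d - (r + 2))%N.

Definition cnt (u : vec d) (i : nat) : nat :=
  #|[pred a : 'I_d | (blk r a == i) && (u 0 a != 0)]|.

Definition prof (u : vec d) : profile := (cnt u 0, cnt u 1, cnt u 2).

Lemma coord_prof (u : vec d) i : coord (prof u) i = cnt u i.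
Proof.
rewrite /coord /prof; case: i => [|[|[|i]]] //=; apply/esym/eq_card0 => a.
by rewrite !inE ltn_eqF // (leq_trans (blk_lt3 r a)).
Qed.

Lemma weight_prof (u : vec d) : weight (prof u) = #|[pred a | u 0 a != 0]|.
Proof.
rewrite /weight /prof /cnt /= -!sum1_card [RHS](bigID (fun a : 'I_d => blk r a == 0)) /=.
rewrite [X in _ = (_ + X)%N](bigID (fun a : 'I_d => blk r a == 1)) /= addnA.
congr (_ + _ + _)%N; apply: eq_bigl => a; rewrite !inE andbC //.
all: by case: (u 0 a != 0); have := blk_lt3 r a; case: (blk r a) => [|[|[|]]].
Qed.

Lemma sum_entries (u : vec d) : \sum_a u 0 a = (weight (prof u))%:R.
Proof.
rewrite weight_prof -(sum_entries_in u predT).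
by apply: eq_bigr => a _; rewrite mulr1.
Qed.

Lemma cnt_addebar (u : vec d) c i : cnt (u + ebar c) i =
  if blk r c == i then (if u 0 c == 0 then (cnt u i).+1 else (cnt u i).-1) else cnt u i.
Proof.
rewrite /cnt (cardD1 c) [in RHS](cardD1 c) !inE mxE ebarE eqxx.
have -> : #|[predD1 [pred a : 'I_d | (blk r a == i) && ((u + ebar c) 0 a != 0)] & c]| =
          #|[predD1 [pred a : 'I_d | (blk r a == i) && (u 0 a != 0)] & c]|.
  by apply: eq_card => a; rewrite !inE mxE ebarE; case: eqP => //= _; rewrite addr0.
by case: (blk r c == i); case: (F2_cases (u 0 c)) => ->.
Qed.

Lemma prof_addebar (u : vec d) c : prof (u + ebar c) = step (prof u) (blk r c, u 0 c == 0).
Proof.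
rewrite /prof /step !cnt_addebar.
by have := blk_lt3 r c; case: (blk r c) => [|[|[|]]] //= _; case: (u 0 c == 0).
Qed.

Hypothesis pattern : PR_pattern r M.

Lemma mulmx_pattern (u : vec d) c :
  (u *m M) 0 c = (keepsQ (prof u) (blk r c, u 0 c == 0))%:R.
Proof.
have Mac a : M a c = 1 + (a == c)%:R + (PRpair r a c)%:R.
  rewrite pattern; case: eqVneq => [->|_]; last by case: PRpair; apply/eqP.
  by rewrite /PRpair eqxx !andbF; apply/eqP.
have diag : \sum_a u 0 a * (a == c)%:R = (u 0 c != 0)%:R.
  rewrite (bigD1 c) //= big1 => [|a /negbTE ->]; last by rewrite mulr0.
  by rewrite eqxx mulr1 addr0 -F2_eq_neq0.
have cross : \sum_a u 0 a * (PRpair r a c)%:R =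
             ((blk r c == 1) * cnt u 0 + (blk r c == 0) * cnt u 1)%N%:R.
  rewrite /PRpair; have := blk_lt3 r c; case: (blk r c) => [|[|[|k]]] // _ /=.
  - rewrite mul0n mul1n /cnt -(sum_entries_in u (fun a => blk r a == 1)).
    apply: eq_bigr => a _; congr (_ * _%:R).
    by have := blk_lt3 r a; case: (blk r a) => [|[|[|]]].
  - rewrite mul0n mul1n addn0 /cnt -(sum_entries_in u (fun a => blk r a == 0)).
    apply: eq_bigr => a _; congr (_ * _%:R).
    by have := blk_lt3 r a; case: (blk r a) => [|[|[|]]].
  - by rewrite big1 // => a _; rewrite andbF mulr0.
rewrite mxE; under eq_bigr do rewrite Mac !mulrDr mulr1.
by rewrite !big_split /= sum_entries diag cross /keepsQ -F2_nat !natrD addrA.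
Qed.

Hypothesis pit_inj : injective (pit pi).

Lemma Qform_prof (u : vec d) : Qform pi u = (qprof (prof u))%:R.
Proof.
move: {2}(weight (prof u)) (erefl (weight (prof u))) => n; elim: n u => [|n IHn] u wu.
  have u0 : u = 0.
    apply/rowP => a; rewrite mxE; apply/eqP/negPn/negP => ua.
    by move: wu; rewrite weight_prof => /card0_eq/(_ a); rewrite inE ua.
  have x0 : (prof u).1.1 = 0%N by move: wu; rewrite /weight; lia.
  by rewrite {1}u0 Qform0 /qprof wu x0.
have [c uc] : exists c, u 0 c != 0.
  by apply/card_gt0P; rewrite -weight_prof wu.
set u' := u + ebar c.
have u'c : u' 0 c = 0 by rewrite mxE ebarE eqxx (F2_eq_neq0 (u 0 c)) uc F2_addxx.
have pu : prof u = step (prof u') (blk r c, true).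
  by rewrite -{1}(addebarK u c) -/u' prof_addebar u'c eqxx.
have wu' : weight (prof u') = n by apply/succn_inj; rewrite -(weight_add _ (blk_lt3 r c)) -pu.
rewrite -{1}(addebarK u c) -/u' (Qform_addebar pit_inj) IHn // mulmx_pattern u'c eqxx pu.
by rewrite qprof_add ?blk_lt3 //; case: (qprof _); case: (keepsQ _ _); apply/eqP.
Qed.

Lemma card_blk k : (r + 3 <= d)%N -> #|[pred a : 'I_d | blk r a == k]| = csize r Un k.
Proof.
move=> rd; have -> : #|[pred a : 'I_d | blk r a == k]| =
                    count (fun i => blk r i == k) (iota 0 d).
  rewrite -sum1_card -sum1_count (_ : iota 0 d = index_iota 0 d).
    by rewrite big_mkord; apply: eq_bigl => a.
  by rewrite /index_iota subn0.
have count_blk m n b : {in iota m n, forall i, blk r i = b} ->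
    count (fun i => blk r i == k) (iota m n) = ((b == k) * n)%N.
  move=> blk_b; rewrite (eq_in_count (a2 := fun=> b == k)) => [|i /blk_b -> //].
  by case: (b == k); rewrite ?count_predT ?count_pred0 ?size_iota ?mul1n.
have -> : d = (3 + (r + (d - (r + 3))))%N by lia.
rewrite !iotaD !count_cat add0n [count _ (iota 3 r)](count_blk _ _ 1%N) => [|i]; last first.
  by rewrite mem_iota /blk; case: ifP => ?; [lia | case: ifP => ?; lia].
rewrite [count _ (iota (3 + r) _)](count_blk _ _ 2%N) => [|i]; last first.
  by rewrite mem_iota /blk; case: ifP => ?; [lia | case: ifP => ?; lia].
by rewrite /csize; case: k count_blk => [|[|[|k]]] _ /=; lia.
Qed.

Lemma coord_prof_le (u : vec d) i : (r + 3 <= d)%N -> (coord (prof u) i <= csize r Un i)%N.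
Proof.
move=> rd; rewrite coord_prof -card_blk //; apply: subset_leq_card.
by apply/subsetP => a; rewrite !inE => /andP [].
Qed.

Lemma exists_blk_elt (u : vec d) i add :
    (if add then cnt u i < #|[pred a : 'I_d | blk r a == i]| else 0 < cnt u i)%N ->
  exists2 c : 'I_d, blk r c == i & (u 0 c == 0) = add.
Proof.
case: add => [cnt_lt | /card_gt0P [c]]; last by rewrite inE => /andP [ci /negbTE uc]; exists c.
have /subsetPn [c] : ~~ ([pred a : 'I_d | blk r a == i] \subset
                        [pred a : 'I_d | (blk r a == i) && (u 0 a != 0)]).
  by apply: contraTN cnt_lt => /subset_leq_card; rewrite -leqNgt.
by rewrite !inE => ci; rewrite ci negbK; exists c.
Qed.

Lemma move_realizable (u : vec d) m : (r + 3 <= d)%N ->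
    move_ok r Un (prof u) m -> Qform pi u = 1 ->
  exists c, prof (u + ebar c) = step (prof u) m /\ Qform pi (u + ebar c) = 1.
Proof.
case: m => i add rd /andP [fits keeps] Qu.
have [c /eqP ci uc] : exists2 c : 'I_d, blk r c == i & (u 0 c == 0) = add.
  by apply: exists_blk_elt; move: fits; rewrite /= coord_prof -(card_blk i rd).
exists c; rewrite prof_addebar ci uc; split => //.
by rewrite (Qform_addebar pit_inj) Qu mulmx_pattern ci uc keeps; apply/eqP.
Qed.

Lemma prof_single (u : vec d) : weight (prof u) = 1%N -> exists c, u = ebar c.
Proof.
rewrite weight_prof => /mem_card1 [c supp_c]; exists c; apply/rowP => a.
by rewrite ebarE {1}[u 0 a]F2_eq_neq0; have := supp_c a; rewrite !inE => ->.
Qed.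

Lemma full_prof_ker (u : vec d) : (r + 3 <= d)%N -> ~~ odd r -> odd Un ->
  prof u = (2, r, Un)%N -> u \in kerOmega pi.
Proof.
move=> rd r_even Un_odd pu.
have full c : u 0 c != 0.
  have full_c : cnt u (blk r c) = #|[pred a : 'I_d | blk r a == blk r c]|.
    by rewrite -coord_prof pu card_blk //; have := blk_lt3 r c; case: (blk r c) => [|[|[|]]].
  apply/negP => /eqP uc0.
  have : (cnt u (blk r c) < #|[pred a : 'I_d | blk r a == blk r c]|)%N.
    apply: proper_card; apply/properP; split.
      by apply/subsetP => a; rewrite !inE => /andP [].
    by exists c; rewrite !inE ?eqxx ?uc0.
  by rewrite full_c ltnn.
apply/kerOmegaP => c; rewrite mulmx_pattern pu (negbTE (full c)) /keepsQ /weight /=.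
by have := blk_lt3 r c; case: (blk r c) => [|[|[|]]] // _;
  rewrite [odd _](_ : _ = false) //; lia.
Qed.

Lemma ebar_notin_ker c : (r + 4 <= d)%N -> ebar c \notin kerOmega pi.
Proof.
move=> rd; have [b blk_b cb] : exists2 b : 'I_d, blk r b = 2%N & c != b.
  have [c0 | c_neq0] := eqVneq (c : nat) 0%N.
    have lt : (r + 3 < d)%N by lia.
    exists (Ordinal lt); first by rewrite /blk /=; case: ifP => ?; [lia | case: ifP => ?; lia].
    by apply/eqP => /(congr1 val) /=; lia.
  have lt : (0 < d)%N by lia.
  by exists (Ordinal lt) => //; apply/eqP => /(congr1 val) /=; lia.
apply/kerOmegaP => /(_ b); rewrite -rowE mxE pattern /PRpair blk_b cb andbF /=.
by move/eqP.
Qed.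

End BlockPattern.

Section Closure.

Variables (d r : nat) (pi : gperm d).
Hypotheses (pit_inj : injective (pit pi)) (pattern : PR_pattern r (Omegabar pi)).
Hypotheses (r24 : r \in [:: 2; 4]%N) (rd : (r + 4 <= d)%N).
Local Notation Un := (d - (r + 2))%N.

Section QclosedSet.

Variable X : {set vec d}.
Hypotheses (clX : Qclosed pi X) (eX : forall c, ebar c \in X).

Lemma reach_mem T p : reach r Un T p -> forall u : vec d, prof r u = p -> Qform pi u = 1 ->
  (forall w, Qform pi w = 1 -> T (prof r w) -> w \in X) -> u \in X.
Proof.
elim=> {p} [p Tp | p m ok _ IH] u pu Qu memT; first by apply: memT; rewrite ?pu.
have r3 : (r + 3 <= d)%N by lia.
rewrite -pu in ok; have [c [pc Qc]] := move_realizable pattern pit_inj r3 ok Qu.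
by apply: Qclosed_toggle clX (eX c) _ Qu; apply: IH; rewrite ?pc ?pu.
Qed.

Lemma mem_of_prof (u : vec d) : Qform pi u = 1 ->
  ~~ [&& (prof r u).1.1 == 2, (prof r u).1.2 == r, (prof r u).2 == Un & odd Un]%N -> u \in X.
Proof.
have r3 : (r + 3 <= d)%N by lia.
have [r_gt0 r_even] : (0 < r)%N /\ ~~ odd r by move: r24; rewrite !inE => /orP [] /eqP ->.
move=> Qu; have [n] := ubnP (prof r u).2; elim: n u Qu => // n IHn u Qu.
case pu: (prof r u) => [[x y] z] /= zn not_full.
have [hx hy hz] : [/\ x <= 2, y <= r & z <= Un]%N.
  by split; [move: (coord_prof_le u 0 r3) | move: (coord_prof_le u 1 r3) |
             move: (coord_prof_le u 2 r3)]; rewrite pu.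
case: z => [|z] in pu zn hz not_full *.
  have qxy : qprof (x, y, 0%N).
    by move: Qu; rewrite (Qform_prof pattern pit_inj) pu; case: qprof.
  apply: (reach_mem (reach_widen _ (reach_single_noU r24 hx hy qxy)) pu Qu) => [|w _ /eqP].
    by lia.
  by case/prof_single => c ->.
apply: (reach_mem (reach_fewer_U r_gt0 r_even hx hy _ not_full) pu Qu) => [|w Qw /= wz].
  by lia.
by apply: (IHn w Qw) => /=; lia.
Qed.

End QclosedSet.

Lemma Qclosure_ebar_PR_pattern : Qclosure pi [set ebar a | a : 'I_d] = NS pi :\: kerOmega pi.
Proof.
apply/eqP; rewrite eqEsubset; apply/andP; split.
  apply: bigcap_inf; rewrite Qclosed_NS_ker //=; apply/subsetP => _ /imsetP [c _ ->].
  by rewrite in_setD (ebar_notin_ker pattern c rd) inE Qform_ebar.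
apply/bigcapsP => X /andP [clX /subsetP eX]; apply/subsetP => u /setDP [].
rewrite inE => /eqP Qu u_ker; apply: mem_of_prof clX _ _ Qu _ => [c|].
  by apply: eX; apply: imset_f.
apply: contra u_ker => /and4P [/eqP x2 /eqP yr /eqP zU Un_odd].
have [_ r_even] : (0 < r)%N /\ ~~ odd r by move: r24; rewrite !inE => /orP [] /eqP ->.
apply: (full_prof_ker pattern) => //; first by lia.
by case: (prof r u) x2 yr zU => [[x y] z] /= -> -> ->.
Qed.

End Closure.

Definition inversion (b : nat -> nat) (i j : nat) : bool :=
  ((i < j) && (b j < b i) || (j < i) && (b i < b j))%N.

Definition pattern_check (r : nat) (L : seq nat) : bool :=
  all (fun i => all (fun j =>
    inversion (fun k => index k.+1 L) i j == (i != j) && ~~ PRpair r i j)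
    (iota 0 (r + 3))) (iota 0 (r + 3)).

Lemma blk_large r i : (r + 3 <= i)%N -> blk r i = 2%N.
Proof. by rewrite /blk; case: ifP => ?; [lia | case: ifP => ?; lia]. Qed.

Lemma index_bottom r d (L : seq nat) i : (i < d)%N ->
  index i.+1 (rev (iota (r + 4) (d - (r + 3))) ++ L) =
  if (r + 3 <= i)%N then (d - i.+1)%N else (d - (r + 3) + index i.+1 L)%N.
Proof.
move=> id; rewrite index_cat mem_rev mem_iota size_rev size_iota.
have -> : (r + 4 <= i.+1 < r + 4 + (d - (r + 3)))%N = (r + 3 <= i)%N by lia.
case: ifP => // ri.
have k_lt : (d - i.+1 < size (iota (r + 4) (d - (r + 3))))%N by rewrite size_iota; lia.
have nth_k : nth 0%N (rev (iota (r + 4) (d - (r + 3)))) (d - i.+1) = i.+1.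
  by rewrite nth_rev // size_iota nth_iota; lia.
by rewrite -{1}nth_k index_uniq ?size_rev ?rev_uniq ?iota_uniq.
Qed.

(* The letters r + 4, ..., d open the bottom row in decreasing order, so each of them
   is inverted with every other letter. *)
Lemma PR_pattern_bottom r d (L : seq nat) : (r + 4 <= d)%N -> pattern_check r L ->
  PR_pattern r (Omegabar (perm_of_bottom d (rev (iota (r + 4) (d - (r + 3))) ++ L))).
Proof.
move=> rd chk a b; have ad := ltn_ord a; have bd := ltn_ord b.
rewrite Omegabar_inversion /= -val_eqE /=; congr (nat_of_bool _)%:R.
rewrite !index_bottom //; case: (leqP (r + 3) a) => ra; case: (leqP (r + 3) b) => rb.
- by rewrite /PRpair (blk_large ra) /= andbT; lia.
- by rewrite /PRpair (blk_large ra) /= andbT; lia.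
- by rewrite /PRpair (blk_large rb) /= andbF andbT; lia.
rewrite !ltn_add2l; move/allP: chk => /(_ a); rewrite mem_iota => /(_ ra) /allP /(_ b).
by rewrite mem_iota => /(_ rb) /eqP.
Qed.

Lemma perm_of_bottom_inj d (bot : seq nat) : injective (pit (perm_of_bottom d bot)).
Proof. exact: val_inj. Qed.

Lemma PR_pattern_tau d : (6 <= d)%N -> PR_pattern 2 (Omegabar (tau d)).
Proof. by move=> d6; apply: (@PR_pattern_bottom 2 d [:: 3; 2; 5; 4; 1]%N). Qed.

Lemma PR_pattern_sigma d : (8 <= d)%N -> PR_pattern 4 (Omegabar (sigma d)).
Proof. by move=> d8; apply: (@PR_pattern_bottom 4 d [:: 3; 2; 7; 6; 5; 4; 1]%N). Qed.

Theorem lemma4p7 (d : nat) (pi : gperm d) :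
  ((6 <= d)%N /\ pi = tau d) \/ ((8 <= d)%N /\ pi = sigma d) ->
  Qclosure pi [set ebar a | a : 'I_d] = NS pi :\: kerOmega pi.
Proof.
case=> [[d6 ->] | [d8 ->]].
  exact: Qclosure_ebar_PR_pattern (@perm_of_bottom_inj _ _) (PR_pattern_tau d6) isT d6.
exact: Qclosure_ebar_PR_pattern (@perm_of_bottom_inj _ _) (PR_pattern_sigma d8) isT d8.
Qed.
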